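(* Let $\mathsf{G}$ be a connected undirected graph on $N=\{1,\dots,n\}$ with edge set $E$ and symmetric positive edge weights $w_{ij}=w_{ji}>0$, let $\mathbf{L}$ be its Laplacian, and consider $\dot{\bm{x}}=-\mathbf{L}\bm{x}$ on $M(\mathsf{a})=\{\bm{x}\in\mathbb{R}^n_{>0}:\frac1n\sum_i x_i=\mathsf{a}\}$ with $\mathsf{a}>0$ (the equilibrium value of each $x_i$). Set $\bm{\rho}=\bm{x}/\mathsf{a}$ and $H_{\mathrm{Gibbs}}(\rho)=\rho(\log\rho-1)$. Then $$V_{\mathrm{Gibbs}}(\bm{x})=\mathsf{a}\sum_{i=1}^n H_{\mathrm{Gibbs}}(\rho_i)=\sum_{i=1}^n x_i\Big(\log\frac{x_i}{\mathsf{a}}-1\Big)$$ is a strict Lyapunov function, and for every $\bm{x}\in M(\mathsf{a})$, $$-\mathbf{L}\bm{x}=-\mathbf{G}^{-1}_{\mathrm{Gibbs}}(\bm{x})\nabla V_{\mathrm{Gibbs}}(\bm{x}),$$ where $\mathbf{G}^{-1}_{\mathrm{Gibbs}}(\bm{x})$ is the Laplacian of $\mathsf{G}$ with state-dependent edge weights $\mathsf{a}\,w_{ij}\,\Lambda(\rho_i,\rho_j)$, $\Lambda(a,b)=\dfrac{a-b}{\log a-\log b}$ for $a\ne b$ and $\Lambda(a,a)=a$ (the logarithmic mean); i.e. $[\mathbf{G}^{-1}_{\mathrm{Gibbs}}(\bm{x})]_{ij}=-\mathsf{a}w_{ij}\Lambda(\rho_i,\rho_j)$ for $\{i,j\}\in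 E$, $0$ for other $i\ne j$, and $[\mathbf{G}^{-1}_{\mathrm{Gibbs}}(\bm{x})]_{ii}=\sum_{j:\{i,j\}\in E}\mathsf{a}w_{ij}\Lambda(\rho_i,\rho_j)$.
   Context: The Laplacian of the weighted undirected graph is $\mathbf{L}=[l_{ij}]$ with $l_{ij}=-w_{ij}$ for $\{i,j\}\in E$, $l_{ij}=0$ for other $i\ne j$, $l_{ii}=\sum_{j:\{i,j\}\in E}w_{ij}$. A strict Lyapunov function is a function $V$ such that along every trajectory whose initial state is not a consensus vector $c\bm{1}$, $V(\bm{x}(t))<V(\bm{x}(0))$ for all $0<t<\infty$. $\nabla$ denotes the Euclidean gradient in $\bm{x}$. *)

From HB Require Import structures.
From mathcomp Require Import all_boot all_order all_algebra.
From mathcomp Require Import all_classical all_reals all_analysis.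
Set Implicit Arguments. Unset Strict Implicit. Unset Printing Implicit Defensive.
Import Order.TTheory GRing.Theory Num.Theory.
Import numFieldNormedType.Exports.
Local Open Scope ring_scope.
Local Open Scope classical_set_scope.

(* A finite simple undirected graph on 'I_n (vertices {1..n} reindexed). *)
Definition simple_graph n (e : rel 'I_n) : Prop :=
  (forall i j, e i j = e j i) /\ (forall i, ~~ e i i).

Definition connected_graph n (e : rel 'I_n) : Prop :=
  forall i j, connect e i j.

Definition edge_weights (R : realType) n (e : rel 'I_n) (w : 'I_n -> 'I_n -> R) : Prop :=
  (forall i j, w i j = w j i) /\ (forall i j, e i j -> 0 < w i j).

Definition laplacian (R : realType) n (e : rel 'I_n) (w : 'I_n -> 'I_n -> R) : 'M[R]_n :=
  \matrix_(i, j) (if i == j then \sum_(k | e i k) w i k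
                  else if e i j then - w i j else 0).

Definition Mset (R : realType) n (a : R) : set 'cV[R]_n :=
  [set x | (forall i, 0 < x i 0) /\ (n%:R)^-1 * \sum_i x i 0 = a].

Definition consensus (R : realType) n (x : 'cV[R]_n) : Prop :=
  exists c : R, x = const_mx c.

Definition trajectory (R : realType) n (L : 'M[R]_n) (x : R -> 'cV[R]_n) : Prop :=
  {within `[0, +oo[, continuous x} /\
  (forall t : R, 0 < t -> derivable x t 1 /\ x^`() t = - (L *m x t)).

Definition strict_lyapunov (R : realType) n (L : 'M[R]_n) (a : R)
  (V : 'cV[R]_n -> R) : Prop :=
  forall x : R -> 'cV[R]_n, trajectory L x -> @Mset R n a (x 0) -> ~ consensus (x 0) ->
    forall t : R, 0 < t -> V (x t) < V (x 0).

Definition Hgibbs (R : realType) (r : R) : R := r * (ln r - 1).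

Definition Vgibbs (R : realType) n (a : R) (x : 'cV[R]_n) : R :=
  a * \sum_i Hgibbs (x i 0 / a).

Definition logmean (R : realType) (p q : R) : R :=
  if p == q then p else (p - q) / (ln p - ln q).

Definition grad (R : realType) n (V : 'cV[R]_n -> R) (x : 'cV[R]_n) : 'cV[R]_n :=
  \col_i ('D_(delta_mx i 0) V x).

Definition Ginv_gibbs (R : realType) n (e : rel 'I_n) (w : 'I_n -> 'I_n -> R) (a : R)
  (x : 'cV[R]_n) : 'M[R]_n :=
  laplacian e (fun i j => a * w i j * logmean (x i 0 / a) (x j 0 / a)).

From HB Require Import structures.
From mathcomp Require Import all_boot all_order all_algebra.
From mathcomp Require Import all_classical all_reals all_analysis.
From mathcomp Require Import ring lra.
Import Order.TTheory GRing.Theory Num.Theory.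
Import numFieldNormedType.Exports.
Local Open Scope ring_scope.
Local Open Scope classical_set_scope.
Set Implicit Arguments. Unset Strict Implicit. Unset Printing Implicit Defensive.

(** The gradient of [V_Gibbs] is [ln (x / a)], and the logarithmic mean is
    exactly the edge weight that converts differences of [ln (x / a)] into
    differences of [x]: this is the gradient form of [-L x].  Along a trajectory
    [d/dt V_Gibbs(x) = - <ln (x / a), L x>], which is minus half the sum over the
    edges of [w_ij (x_i - x_j) (ln x_i - ln x_j) >= 0]; on a connected graph it
    vanishes only at consensus.  Trajectories stay positive, so this holds for
    all [t > 0]; if [V_Gibbs] did not decrease strictly on [[0, t]], the state
    would be at consensus, hence stationary, on [(0, t)], and by continuity at
    consensus at time [0]. *)

Section GibbsLyapunov.
Variable R : realType.

Lemma is_derive_Hgibbs (r : R) : 0 < r -> is_derive r 1 (@Hgibbs R) (ln r).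
Proof.
move=> r0.
have -> : @Hgibbs R = (fun x => x) * (fun x => ln x - 1).
  by apply/funext => x; rewrite /Hgibbs.
have dlnB1 : is_derive r 1 (fun x : R => ln x - 1) r^-1.
  have := @is_deriveB R R R (@ln R) (cst 1) r 1 r^-1 0 (is_derive1_ln r0) _.
  by rewrite subr0 => dlnB1; exact: dlnB1.
apply: (is_derive_eq (is_deriveM (is_derive_id _ _) dlnB1)).
rewrite /GRing.scale /= mulr1 mulfV ?gt_eqF //; lra.
Qed.

Lemma is_derive_coord_scale (f : R -> R) n (y v : 'cV[R]_n) k (a df : R) :
  is_derive (y k 0 / a) 1 f df ->
  is_derive y v (fun z => f (z k 0 / a)) ((v k 0 / a) * df).
Proof.
move=> [fd fv].
have quotE : (fun h : R => h^-1 *: (((fun z : 'cV[R]_n => f (z k 0 / a)) \o shift y)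
      (h *: v) - f (y k 0 / a))) =
    (fun h : R => h^-1 *: ((f \o shift (y k 0 / a)) (h *: (v k 0 / a))
      - f (y k 0 / a))).
  apply/funext => h /=; rewrite !mxE; congr (_ *: (f _ - _)).
  by rewrite /GRing.scale /= mulrDl mulrA.
have dif : differentiable f (y k 0 / a) by apply/derivable1_diffP.
have dc : derivable f (y k 0 / a) (v k 0 / a) by apply: diff_derivable.
apply: DeriveDef; first by rewrite /derivable quotE.
rewrite /derive quotE -/(derive f _ _) deriveE // deriv1E //.
by rewrite derive1E fv.
Qed.

Lemma VgibbsE n (a : R) :
  @Vgibbs R n a = a \*: \sum_(k < n) (fun z : 'cV[R]_n => Hgibbs (z k 0 / a)).
Proof. by apply/funext => z; rewrite /Vgibbs /= fct_sumE. Qed.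

Lemma is_derive_Vgibbs n (a : R) (y v : 'cV[R]_n) : 0 < a -> (forall k, 0 < y k 0) ->
  is_derive y v (@Vgibbs R n a) (\sum_k ln (y k 0 / a) * v k 0).
Proof.
move=> a0 yp; rewrite VgibbsE.
have dH k : is_derive y v (fun z : 'cV[R]_n => Hgibbs (z k 0 / a))
    ((v k 0 / a) * ln (y k 0 / a)).
  by apply/is_derive_coord_scale/is_derive_Hgibbs; rewrite divr_gt0.
apply: (is_derive_eq (is_deriveZ a (is_derive_sum dH))).
rewrite /GRing.scale /= mulr_sumr; apply: eq_bigr => k _.
by field; exact: lt0r_neq0.
Qed.

Lemma differentiable_Vgibbs n (a : R) (y : 'cV[R]_n) : 0 < a -> (forall k, 0 < y k 0) ->
  differentiable (@Vgibbs R n a) y.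
Proof.
move=> a0 yp; rewrite VgibbsE; apply/differentiableZ/differentiable_sum => k.
have -> : (fun z : 'cV[R]_n => Hgibbs (z k 0 / a)) =
    (@Hgibbs R) \o (fun z : 'cV[R]_n => z k 0 * a^-1) by [].
apply: differentiable_comp.
  by apply: differentiableM => //; exact: differentiable_coord.
by apply/derivable1_diffP; case: (is_derive_Hgibbs (divr_gt0 (yp k) a0)).
Qed.

Lemma grad_VgibbsE n (a : R) (y : 'cV[R]_n) k : 0 < a -> (forall k, 0 < y k 0) ->
  grad (@Vgibbs R n a) y k 0 = ln (y k 0 / a).
Proof.
move=> a0 yp; have dV := is_derive_Vgibbs (delta_mx k 0) a0 yp.
rewrite /grad mxE (@derive_val _ _ _ _ _ _ _ dV).
rewrite (bigD1 k) //= big1 ?addr0 => [|l lk]; rewrite mxE.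
  by rewrite !eqxx mulr1.
by rewrite (negPf lk) mulr0.
Qed.

Lemma laplacian_mulmxE n (e : rel 'I_n) (W : 'I_n -> 'I_n -> R) (v : 'cV[R]_n) i :
  ~~ e i i -> (laplacian e W *m v) i 0 = \sum_(k | e i k) W i k * (v i 0 - v k 0).
Proof.
move=> nii; rewrite mxE (bigD1 i) //= !mxE eqxx.
under eq_bigr => k /negPf ki do rewrite !mxE eq_sym ki.
under [RHS]eq_bigr => k _ do rewrite mulrBr.
rewrite sumrB mulr_suml; congr (_ + _).
rewrite -sumrN big_mkcond [RHS]big_mkcond [in RHS](bigD1 i) //= (negPf nii) ?oppr0 add0r.
rewrite [RHS]big_mkcond; apply: eq_bigr => k _.
by case: (k != i); case: (e i k); rewrite ?mulNr ?mul0r.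
Qed.

Lemma logmean_lnB (p q : R) : 0 < p -> 0 < q -> logmean p q * (ln p - ln q) = p - q.
Proof.
move=> p0 q0; rewrite /logmean; case: eqP => [->|pq]; first by rewrite !subrr mulr0.
rewrite divfK // subr_eq0; apply/eqP => /ln_inj lnpq.
by apply/pq/lnpq; rewrite posrE.
Qed.

Lemma laplacian_Ginv_gibbs n (e : rel 'I_n) (w : 'I_n -> 'I_n -> R) (a : R)
    (x : 'cV[R]_n) :
  simple_graph e -> 0 < a -> Mset a x ->
  laplacian e w *m x = Ginv_gibbs e w a x *m grad (Vgibbs a) x.
Proof.
move=> [_ eirr] a0 [xp _]; apply/matrixP => i j.
rewrite (ord1 j) /Ginv_gibbs !laplacian_mulmxE //; apply: eq_bigr => k _.
rewrite !grad_VgibbsE // -mulrA logmean_lnB ?divr_gt0 //.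
by field; exact: lt0r_neq0.
Qed.

Lemma mulr_lnB_ge0 (a p q : R) : 0 < a -> 0 < p -> 0 < q ->
  0 <= (p - q) * (ln (p / a) - ln (q / a)).
Proof.
move=> a0 p0 q0.
have pa : p / a \in Num.pos by rewrite posrE divr_gt0.
have qa : q / a \in Num.pos by rewrite posrE divr_gt0.
have [pq|qp] := lerP p q.
  apply: mulr_le0; first by rewrite subr_le0.
  by rewrite subr_le0 ler_ln // ler_pM2r ?invr_gt0.
apply: mulr_ge0; first by rewrite subr_ge0 ltW.
by rewrite subr_ge0 ler_ln // ler_pM2r ?invr_gt0 // ltW.
Qed.

Lemma mulr_lnB_eq0 (a p q : R) : 0 < a -> 0 < p -> 0 < q ->
  (p - q) * (ln (p / a) - ln (q / a)) = 0 -> p = q.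
Proof.
move=> a0 p0 q0 /eqP; rewrite mulf_eq0 subr_eq0 subr_eq0 => /orP [/eqP //|].
move=> /eqP /ln_inj lnpq.
have : p / a = q / a by apply: lnpq; rewrite posrE divr_gt0.
by move/(congr1 (fun z => z * a)); rewrite !divfK ?gt_eqF.
Qed.

Definition dissipation n (e : rel 'I_n) (w : 'I_n -> 'I_n -> R) (a : R)
    (v : 'cV[R]_n) : R :=
  \sum_k ln (v k 0 / a) * (laplacian e w *m v) k 0.

Section Dissipation.
Variables (n : nat) (e : rel 'I_n) (w : 'I_n -> 'I_n -> R) (a : R) (v : 'cV[R]_n).
Hypotheses (sg : simple_graph e) (ew : edge_weights e w).
Hypotheses (a0 : 0 < a) (vp : forall k, 0 < v k 0).

Let edge_term k j := if e k j then
  w k j * ((v k 0 - v j 0) * (ln (v k 0 / a) - ln (v j 0 / a))) else 0.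

Lemma dissipation_sym : dissipation e w a v *+ 2 = \sum_k \sum_j edge_term k j.
Proof.
have [esym eirr] := sg; have [wsym _] := ew.
have D1 : dissipation e w a v = \sum_k \sum_j (if e k j then
    w k j * ((v k 0 - v j 0) * ln (v k 0 / a)) else 0).
  rewrite /dissipation; apply: eq_bigr => k _.
  rewrite laplacian_mulmxE // mulr_sumr big_mkcond; apply: eq_bigr => j _.
  by case: (e k j) => //; ring.
have D2 : dissipation e w a v = \sum_k \sum_j (if e k j then
    w k j * ((v j 0 - v k 0) * ln (v j 0 / a)) else 0).
  rewrite D1 exchange_big; apply: eq_bigr => k _; apply: eq_bigr => j _.
  by rewrite esym wsym.
rewrite mulr2n {1}D1 D2 -big_split; apply: eq_bigr => k _.
rewrite -big_split; apply: eq_bigr => j _; rewrite /edge_term /=.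
by case: (e k j); [ring | rewrite addr0].
Qed.

Let edge_term_ge0 k j : 0 <= edge_term k j.
Proof.
rewrite /edge_term; case ekj: (e k j) => //.
by apply: mulr_ge0; [exact: ltW (ew.2 _ _ ekj) | exact: mulr_lnB_ge0].
Qed.

Lemma dissipation_ge0 : 0 <= dissipation e w a v.
Proof.
have : 0 <= dissipation e w a v *+ 2.
  rewrite dissipation_sym; apply: sumr_ge0 => k _; apply: sumr_ge0 => j _.
  exact: edge_term_ge0.
by rewrite mulr2n; lra.
Qed.

Lemma dissipation_eq0 : dissipation e w a v = 0 -> forall k j, e k j -> v k 0 = v j 0.
Proof.
move=> D0 k j ekj.
have /esym sum0 := dissipation_sym; rewrite D0 mul0rn in sum0.
have row_ge0 l : true -> 0 <= \sum_i edge_term l i.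
  by move=> _; apply: sumr_ge0 => i _; exact: edge_term_ge0.
have /(psumr_eq0P (fun i _ => edge_term_ge0 k i)) := psumr_eq0P row_ge0 sum0 (i := k) isT.
move=> /(_ j isT); rewrite /edge_term ekj => /eqP.
rewrite mulf_eq0 gt_eqF ?(ew.2 _ _ ekj) //= => /eqP.
exact: mulr_lnB_eq0.
Qed.

End Dissipation.

Lemma connected_graph_const n (e : rel 'I_n) (f : 'I_n -> R) :
  connected_graph e -> (forall k j, e k j -> f k = f j) -> forall i j, f i = f j.
Proof.
move=> con fe i j; have /connectP [p pp ->] := con i j.
elim: p i pp => [|k p IH] i //= /andP [eik pk].
by rewrite (fe _ _ eik) IH.
Qed.

Lemma consensus_of_eq n (v : 'cV[R]_n) : (forall i j, v i 0 = v j 0) -> consensus v.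
Proof.
case: n v => [|m] v veq; first by exists 0; apply/matrixP => i; case: i.
by exists (v ord0 0); apply/matrixP => i j; rewrite (ord1 j) mxE; exact: veq.
Qed.

Lemma is_derive0_itv_eq (f : R -> R) (b c : R) : b <= c ->
  (forall s, s \in `]b, c[%R -> is_derive s 1 f 0) -> {within `[b, c], continuous f} ->
  f b = f c.
Proof.
move=> bc df cf; have [d _ fcb] := @MVT_segment R f (fun _ => 0) b c bc df cf.
by apply/eqP; rewrite eq_sym -subr_eq0 fcb mul0r.
Qed.

Lemma continuous_withinM (T : topologicalType) (A : set T) (f g : T -> R) :
  {within A, continuous f} -> {within A, continuous g} ->
  {within A, continuous (fun s => f s * g s)}.
Proof.
move=> cf cg; apply/subspace_continuousP => s As.
exact: cvgM ((subspace_continuousP _ _).1 cf s As) ((subspace_continuousP _ _).1 cg s As).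
Qed.

Section Trajectory.
Variables (n : nat) (L : 'M[R]_n) (x : R -> 'cV[R]_n).
Hypothesis tr : trajectory L x.

Lemma derive1_trajectory_coord i t : 0 < t ->
  derivable (fun s => x s i 0) t 1 /\ (fun s => x s i 0)^`() t = - (L *m x t) i 0.
Proof.
move=> t0; have [dx dv] := tr.2 t t0.
have dxi := (derivable_mxP _ _ _).1 dx i 0.
split=> //; transitivity (x^`() t i 0); last by rewrite dv mxE.
by rewrite !derive1E derive_mx // mxE.
Qed.

Lemma continuous_trajectory_coord i :
  {within `[0, +oo[, continuous (fun s => x s i 0)}.
Proof.
apply: (@within_continuous_comp _ _ _ _ x (fun M : 'cV[R]_n => M i 0)) tr.1 => M _.
exact/differentiable_continuous/differentiable_coord.
Qed.

End Trajectory.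

Section LaplacianFlow.
Variables (n : nat) (e : rel 'I_n) (w : 'I_n -> 'I_n -> R) (x : R -> 'cV[R]_n).
Hypotheses (sg : simple_graph e) (ew : edge_weights e w).
Hypothesis tr : trajectory (laplacian e w) x.

(* Integrating factor: with [d] the weighted degree of [i], [exp (d s) x_i(s)]
   has derivative [exp (d s) \sum_(k ~ i) w_ik x_k(s)], nonnegative below [T]. *)
Lemma trajectory_gt0_upto (T : R) : (forall i, 0 < x 0 i 0) -> 0 <= T ->
  (forall s, 0 <= s -> s < T -> forall k, 0 < x s k 0) -> forall i, 0 < x T i 0.
Proof.
move=> x0p T0 Tlow i; have [_ eirr] := sg; have [_ wpos] := ew.
set d := \sum_(k | e i k) w i k.
have dexp (s : R) : is_derive s 1 (fun s => expR (d * s)) (expR (d * s) * d).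
  apply: (@is_derive1_comp _ expR (fun s => d * s)).
  have -> : (fun s : R => d * s) = d \*: id by apply/funext.
  have := is_deriveZ d (is_derive_id s (1 : R)).
  by rewrite /GRing.scale /= mulr1.
set y := (fun s => expR (d * s)) * (fun s => x s i 0).
have dy (s : R) : 0 < s -> s < T ->
    is_derive s 1 y (expR (d * s) * \sum_(k | e i k) w i k * x s k 0).
  move=> s0 sT; have [dx dv] := derive1_trajectory_coord tr i s0.
  have dxi : is_derive s 1 (fun s => x s i 0) (- (laplacian e w *m x s) i 0).
    by rewrite -dv derive1E; exact: derivableP dx.
  apply: (is_derive_eq (is_deriveM (dexp s) dxi)).
  rewrite laplacian_mulmxE // /GRing.scale /=.
  under eq_bigr do rewrite mulrBr.
  by rewrite sumrB -mulr_suml -/d; ring.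
have cy : {within `[0, T], continuous y}.
  apply: continuous_withinM.
    apply: continuous_subspaceT => s.
    by have [/derivable1_diffP/differentiable_continuous] := dexp s.
  apply: continuous_subspaceW (continuous_trajectory_coord tr (i := i)).
  by move=> s; rewrite /= !in_itv /= => /andP [->].
have : y 0 <= y T.
  apply: (@ger0_derive1_le_cc _ y 0 T) => //; rewrite ?in_itv /= ?lexx ?T0 //.
  - by move=> s; rewrite in_itv /= => /andP [s0 sT]; case: (dy s s0 sT).
  - move=> s; rewrite in_itv /= => /andP [s0 sT].
    rewrite derive1E (@derive_val _ _ _ _ _ _ _ (dy s s0 sT)).
    apply/mulr_ge0; first exact/ltW/expR_gt0.
    apply: sumr_ge0 => k ek; apply: mulr_ge0; first exact/ltW/wpos.
    exact: ltW (Tlow s (ltW s0) sT k).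
have yE r : y r = expR (d * r) * x r i 0 by [].
rewrite !yE mulr0 expR0 mul1r => yT.
by have := lt_le_trans (x0p i) yT; rewrite pmulr_rgt0 ?expR_gt0.
Qed.

Lemma trajectory_gt0 : (forall i, 0 < x 0 i 0) -> forall s, 0 <= s -> forall i, 0 < x s i 0.
Proof.
move=> x0p.
have [[s [s0 [i xsi]]]|] := pselect (exists s, 0 <= s /\ exists i, x s i 0 <= 0); last first.
  move=> allpos s s0 i; rewrite ltNge; apply/negP => xsi; apply: allpos.
  by exists s; split => //; exists i.
exfalso.
set K := [set s | 0 <= s /\ exists i, x s i 0 <= 0].
have Kne : K !=set0 by exists s; split => //; exists i.
have Klb : has_lbound K by exists 0 => r [].
set T := inf K.
have T0 : 0 <= T by apply: lb_le_inf => // r [].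
have Tlow r : 0 <= r -> r < T -> forall k, 0 < x r k 0.
  move=> r0 rT k; rewrite ltNge; apply/negP => xrk.
  have Kr : K r by split => //; exists k.
  by have := ge_inf Klb Kr; rewrite leNgt rT.
have xTp := trajectory_gt0_upto x0p T0 Tlow.
have : \forall r \near within `[0, +oo[ (nbhs T), forall k, 0 < x r k 0.
  apply: filter_forall => k.
  have := (subspace_continuousP _ _).1 (continuous_trajectory_coord tr (i := k)) T.
  rewrite /= in_itv /= T0 => /(_ isT) cv.
  exact: (cvgr_gt _ cv _ (xTp k)).
rewrite near_withinE => /nbhs_ballP [r /= r0 near_pos].
have [k Kk kT] := inf_adherent r0 (conj Kne Klb).
have Tk := ge_inf Klb Kk; case: Kk => k0 [j xkj].
have := near_pos k; rewrite /ball /= distrC ger0_norm ?subr_ge0 // => xkp.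
have : 0 < x k j 0.
  by apply: xkp; [rewrite /T; lra | rewrite in_itv /= k0].
by rewrite ltNge xkj.
Qed.

Lemma consensus_trajectory_start (t : R) : 0 < t ->
  (forall s, 0 < s -> s < t -> forall i j, x s i 0 = x s j 0) ->
  forall i j, x 0 i 0 = x 0 j 0.
Proof.
move=> t0 cons_s i j; have [_ eirr] := sg.
have t2 : 0 < t / 2 by rewrite divr_gt0.
have t2t : t / 2 < t by rewrite ltr_pdivrMr // ltr_pMr // ltr1n.
have coord_const k : x 0 k 0 = x (t / 2) k 0.
  apply: (is_derive0_itv_eq (f := fun s => x s k 0) (ltW t2)).
    move=> s; rewrite in_itv /= => /andP [s0 st2].
    have [dx dv] := derive1_trajectory_coord tr k s0.
    apply: DeriveDef => //; rewrite -derive1E dv laplacian_mulmxE //.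
    rewrite big1 ?oppr0 // => l _.
    by rewrite (cons_s s s0 (lt_trans st2 t2t) k l) subrr mulr0.
  apply: continuous_subspaceW (continuous_trajectory_coord tr (i := k)).
  by move=> s; rewrite /= !in_itv /= => /andP [->].
by rewrite !coord_const; apply: cons_s.
Qed.

Variable a : R.
Hypothesis a0 : 0 < a.
Hypothesis xpos : forall s, 0 <= s -> forall k, 0 < x s k 0.

Lemma is_derive_Vgibbs_trajectory (s : R) : 0 < s ->
  is_derive s 1 (Vgibbs a \o x) (- dissipation e w a (x s)).
Proof.
move=> s0; have [dx dv] := tr.2 s s0.
have dfx : differentiable x s by apply/derivable1_diffP.
have dV := differentiable_Vgibbs a0 (xpos (ltW s0)).
have dVx : differentiable (Vgibbs a \o x) s by exact: differentiable_comp.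
apply: DeriveDef; first exact/derivable1_diffP.
rewrite deriveE // diff_comp // /= -(@deriveE _ _ _ x s 1 dfx) -derive1E dv.
rewrite -(@deriveE _ _ _ _ _ _ dV).
rewrite (@derive_val _ _ _ _ _ _ _ (is_derive_Vgibbs (- (laplacian e w *m x s)) a0
  (xpos (ltW s0)))).
by rewrite /dissipation -sumrN; apply: eq_bigr => k _; rewrite mxE mulrN.
Qed.

Lemma Vgibbs_trajectory_nonincr (u v : R) : 0 <= u -> u <= v ->
  Vgibbs a (x v) <= Vgibbs a (x u).
Proof.
move=> u0 uv.
apply: (@ler0_derive1_le_cc _ (Vgibbs a \o x) 0 v);
  rewrite ?in_itv /= ?u0 ?uv ?(le_trans u0 uv) ?lexx //.
- move=> s; rewrite in_itv /= => /andP [s0 _].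
  by case: (is_derive_Vgibbs_trajectory s0).
- move=> s; rewrite in_itv /= => /andP [s0 _].
  rewrite derive1E (@derive_val _ _ _ _ _ _ _ (is_derive_Vgibbs_trajectory s0)).
  by rewrite oppr_le0; exact: dissipation_ge0 sg ew a0 (xpos (ltW s0)).
- apply: within_continuous_comp.
    move=> y; rewrite inE => -[s]; rewrite /= in_itv /= => /andP [s0 _] <-.
    exact/differentiable_continuous/(differentiable_Vgibbs a0 (xpos s0)).
  apply: continuous_subspaceW tr.1.
  by move=> s; rewrite /= !in_itv /= => /andP [->].
Qed.

Lemma Vgibbs_flat_consensus (t : R) : connected_graph e ->
  (forall s, 0 < s -> s < t -> Vgibbs a (x s) = Vgibbs a (x 0)) ->
  forall s, 0 < s -> s < t -> forall i j, x s i 0 = x s j 0.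
Proof.
move=> con flat s s0 st.
apply: (connected_graph_const (f := fun k => x s k 0) con).
apply: (dissipation_eq0 sg ew a0 (xpos (ltW s0))).
have : 'D_1 (Vgibbs a \o x) s = 'D_1 (cst (Vgibbs a (x 0))) s.
  apply: near_eq_derive.
  have := @near_in_itvoo R 0 t s; rewrite in_itv /= s0 st => /(_ isT).
  by apply: filterS => r; rewrite in_itv /= => /andP [r0 rt]; rewrite /= flat.
rewrite (@derive_val _ _ _ _ _ _ _ (is_derive_Vgibbs_trajectory s0)) derive_cst.
by move/eqP; rewrite oppr_eq0 => /eqP.
Qed.

End LaplacianFlow.

Lemma strict_lyapunov_Vgibbs n (e : rel 'I_n) (w : 'I_n -> 'I_n -> R) (a : R) :
  simple_graph e -> connected_graph e -> edge_weights e w -> 0 < a ->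
  strict_lyapunov (laplacian e w) a (Vgibbs a).
Proof.
move=> sg con ew a0 x tr [xp _] ncons t t0.
have xpos := trajectory_gt0 sg ew tr xp.
have nincr := Vgibbs_trajectory_nonincr sg ew tr a0 xpos.
rewrite lt_neqAle (nincr 0 t (lexx 0) (ltW t0)) andbT.
apply/eqP => Vt; apply: ncons.
have flat s : 0 < s -> s < t -> Vgibbs a (x s) = Vgibbs a (x 0).
  move=> s0 st; apply/le_anti; rewrite (nincr 0 s (lexx 0) (ltW s0)) -Vt.
  exact: nincr s t (ltW s0) (ltW st).
apply: consensus_of_eq; apply: (consensus_trajectory_start sg tr t0).
by apply: (Vgibbs_flat_consensus sg ew tr a0 xpos con flat).
Qed.

End GibbsLyapunov.

Theorem corollary1 (R : realType) (n : nat) (e : rel 'I_n)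
  (w : 'I_n -> 'I_n -> R) (a : R) :
  simple_graph e -> connected_graph e -> edge_weights e w -> 0 < a ->
  strict_lyapunov (laplacian e w) a (Vgibbs a) /\
  (forall x : 'cV[R]_n, @Mset R n a x ->
     - (laplacian e w *m x) = - (Ginv_gibbs e w a x *m grad (Vgibbs a) x)).
Proof.
move=> sg con ew a0; split; first exact: strict_lyapunov_Vgibbs.
by move=> x xM; rewrite (laplacian_Ginv_gibbs w sg a0 xM).
Qed.
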